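(* Let $n>2$ be an integer, $a\in\mathbb{R}$ with $a\neq0$, and $b\in\{1,-1\}$. Put $\varphi=2\pi/n$, $p=\lfloor (n-1)/2\rfloor$, $q=\lfloor n/2\rfloor$, and for $c\in\mathbb{R}$ define \[\lambda_k(c)=c+2a\cos(k\varphi)\ (k=1,\dots,n-1),\quad \lambda_{\mathrm{sep}}(c)=c+2a,\quad \lambda_{\mathrm{lim}}(c)=c-2a,\] \[\lambda_\pm(c)=\tfrac12\Bigl(2a-(n-1)c\pm\sqrt{\bigl(2a+(n+1)c\bigr)^2+4n}\Bigr).\] Then: (a) for every $k=1,\dots,n-1$ and every $c$, $\lambda_{\mathrm{sep}}(c)>\lambda_k(c)$ if $a>0$, and $\lambda_{\mathrm{sep}}(c)<\lambda_k(c)$ if $a<0$; (b) $\lambda_k=\lambda_{n-k}$ for $k=1,\dots,p$; (c) the sequence $(\lambda_1,\dots,\lambda_q)$ is strictly decreasing if $a>0$ and strictly increasing if $a<0$; all $\lambda_k$ are bounded (below if $a>0$, above if $a<0$) by $\lambda_{\mathrm{lim}}=c-2a$, and for even $n$ one has $\lambda_q=\lambda_{n/2}=c-2a$; (d) for $a>0$ (resp. $a<0$) each curve $\lambda=\lambda_k(c)$ meets the curve $\lambda=\lambda_-(c)$ (resp. $\lambda=\lambda_+(c)$) at exactly one point $\mathsf C_k$, whose abscissa is \[c_k=\frac{4a^2\cos(k\varphi)\bigl(1-\cos(k\varphi)\bigr)+n}{2(n+1)a\bigl(\cos(k\varphi)-1\bigr)};\] as $k$ increases from $1$ to $q$, the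 $c_k$ form an increasing sequence if $a>0$ and a decreasing sequence if $a<0$.
   Context: The functions $\lambda_\pm(c)$ and $\lambda_k(c)$ are the eigenvalues of the $(n+1)\times(n+1)$ symmetric matrix $m_n(a,b,c)$ with $b^2=1$: rows/columns indexed $0,\dots,n$, $(0,0)$-entry $-nc$, $(0,j)$- and $(j,0)$-entries $b$ ($j=1,\dots,n$), lower-right block the circulant $\mathrm{circ}(c,a,0,\dots,0,a)$. *)

From Stdlib Require Import Reals Lra Lia.
Open Scope R_scope.

Definition phi (n : nat) : R := 2 * PI / INR n.

Definition lam_k (n : nat) (a : R) (k : nat) (c : R) : R :=
  c + 2 * a * cos (INR k * phi n).

Definition lam_sep (a c : R) : R := c + 2 * a.
Definition lam_lim (a c : R) : R := c - 2 * a.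

Definition lam_disc (n : nat) (a c : R) : R :=
  (2 * a + (INR n + 1) * c) ^ 2 + 4 * INR n.

Definition lam_plus (n : nat) (a c : R) : R :=
  / 2 * (2 * a - (INR n - 1) * c + sqrt (lam_disc n a c)).
Definition lam_minus (n : nat) (a c : R) : R :=
  / 2 * (2 * a - (INR n - 1) * c - sqrt (lam_disc n a c)).

Definition c_k (n : nat) (a : R) (k : nat) : R :=
  (4 * a ^ 2 * cos (INR k * phi n) * (1 - cos (INR k * phi n)) + INR n)
  / (2 * (INR n + 1) * a * (cos (INR k * phi n) - 1)).

Definition p_of (n : nat) : nat := Nat.div (n - 1) 2.
Definition q_of (n : nat) : nat := Nat.div n 2.

From Stdlib Require Import Reals Lra Lia.
Open Scope R_scope.

(* Every [lam_k] is [c + 2 a t] with [t = cos (k phi) < 1], so (a)-(c) are facts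
   about the cosines of the angles [k phi]. For (d) put [u = (n+1) c + 2 a t] and
   [v = 2 a (t - 1)]: the discriminant is [(u - v)^2 + 4 n], and [lam_k = lam_-/+]
   becomes [-/+ sqrt ((u - v)^2 + 4 n) = u + v]. As [u v = n > 0] forces [u + v]
   to have the sign of [v], and [v] has the sign of [-a], this is equivalent to
   [u v = n], an equation linear in [c] whose root
   [c_k = -(2 a t + n / (2 a (1 - t))) / (n + 1)] is monotone in [t]. *)

Lemma cos_2PI_minus (x : R) : cos (2 * PI - x) = cos x.
Proof. rewrite cos_minus, cos_2PI, sin_2PI; ring. Qed.

Lemma cos_lt_1 (x : R) : 0 < x < 2 * PI -> cos x < 1.
Proof.
  intros Hx.
  replace x with (2 * (x / 2)) by field.
  rewrite cos_2a_sin.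
  assert (0 < sin (x / 2)) by (apply sin_gt_0; lra).
  nra.
Qed.

Lemma INR_mul_phi (n : nat) : (0 < n)%nat -> INR n * phi n = 2 * PI.
Proof.
  intros Hn. assert (0 < INR n) by (apply lt_0_INR; lia).
  unfold phi. field. lra.
Qed.

Lemma phi_pos (n : nat) : (0 < n)%nat -> 0 < phi n.
Proof.
  intros Hn. assert (0 < INR n) by (apply lt_0_INR; lia).
  pose proof PI_RGT_0. unfold phi. apply Rdiv_lt_0_compat; lra.
Qed.

Lemma angle_lt (n k l : nat) : (0 < n)%nat -> (k < l)%nat ->
  INR k * phi n < INR l * phi n.
Proof.
  intros Hn Hkl. apply Rmult_lt_compat_r; [now apply phi_pos | now apply lt_INR].
Qed.

Lemma angle_le_PI (n l : nat) : (0 < n)%nat -> (2 * l <= n)%nat -> INR l * phi n <= PI.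
Proof.
  intros Hn Hl.
  assert (H2l : 2 * INR l <= INR n).
  { replace 2 with (INR 2) by reflexivity. rewrite <- mult_INR. now apply le_INR. }
  pose proof (INR_mul_phi n Hn). pose proof (phi_pos n Hn). nra.
Qed.

Lemma cos_angle_lt_1 (n k : nat) : (1 <= k < n)%nat -> cos (INR k * phi n) < 1.
Proof.
  intros Hk. apply cos_lt_1. split.
  - rewrite <- (Rmult_0_l (phi n)), <- INR_0. apply angle_lt; lia.
  - rewrite <- (INR_mul_phi n) by lia. apply angle_lt; lia.
Qed.

Lemma cos_angle_decreasing (n k l : nat) : (0 < n)%nat -> (k < l)%nat -> (2 * l <= n)%nat ->
  cos (INR l * phi n) < cos (INR k * phi n).
Proof.
  intros Hn Hkl Hl.
  pose proof (pos_INR k). pose proof (phi_pos n Hn).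
  pose proof (angle_lt n k l Hn Hkl). pose proof (angle_le_PI n l Hn Hl).
  apply cos_decreasing_1; nra.
Qed.

Lemma cos_angle_reflect (n k : nat) : (0 < n)%nat -> (k <= n)%nat ->
  cos (INR (n - k) * phi n) = cos (INR k * phi n).
Proof.
  intros Hn Hk.
  rewrite minus_INR, Rmult_minus_distr_r, INR_mul_phi by assumption.
  apply cos_2PI_minus.
Qed.

Lemma cos_angle_half_turn (n : nat) : (0 < n)%nat -> Nat.Even n ->
  cos (INR (n / 2) * phi n) = -1.
Proof.
  intros Hn [m ->].
  rewrite Nat.mul_comm, Nat.div_mul by lia.
  replace (INR m * phi (m * 2)) with PI; [apply cos_PI|].
  assert (0 < INR m) by (apply lt_0_INR; lia).
  unfold phi. rewrite mult_INR. simpl. field. lra.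
Qed.

Lemma sqrt_sq_diff_eq_sum (N u v : R) : 0 < N -> 0 < v ->
  sqrt ((u - v) ^ 2 + 4 * N) = u + v <-> u * v = N.
Proof.
  intros HN Hv.
  assert (Hdisc : 0 <= (u - v) ^ 2 + 4 * N) by (pose proof (pow2_ge_0 (u - v)); lra).
  assert (Hsq : (u + v) * (u + v) - ((u - v) ^ 2 + 4 * N) = 4 * (u * v - N)) by ring.
  split.
  - intros Hs.
    assert (0 <= u + v) by (rewrite <- Hs; apply sqrt_pos).
    apply sqrt_lem_0 in Hs; [lra | assumption | assumption].
  - intros Huv. apply sqrt_lem_1; [assumption | nra | lra].
Qed.

Lemma opp_sqrt_sq_diff_eq_sum (N u v : R) : 0 < N -> v < 0 ->
  - sqrt ((u - v) ^ 2 + 4 * N) = u + v <-> u * v = N.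
Proof.
  intros HN Hv.
  replace ((u - v) ^ 2) with ((- u - - v) ^ 2) by ring.
  replace (u * v) with (- u * - v) by ring.
  rewrite <- sqrt_sq_diff_eq_sum by lra.
  split; intros; lra.
Qed.

Definition meet_abscissa (N a t : R) : R :=
  (4 * a ^ 2 * t * (1 - t) + N) / (2 * (N + 1) * a * (t - 1)).

Lemma c_k_meet_abscissa (n : nat) (a : R) (k : nat) :
  c_k n a k = meet_abscissa (INR n) a (cos (INR k * phi n)).
Proof. reflexivity. Qed.

Lemma meet_abscissa_opp (N a t : R) : meet_abscissa N (- a) t = - meet_abscissa N a t.
Proof.
  unfold meet_abscissa, Rdiv.
  replace (2 * (N + 1) * - a * (t - 1)) with (- (2 * (N + 1) * a * (t - 1))) by ring.
  rewrite Rinv_opp. ring.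
Qed.

Lemma meet_abscissa_spec (N a t c : R) : 0 < N -> a <> 0 -> t < 1 ->
  ((N + 1) * c + 2 * a * t) * (2 * a * (t - 1)) = N <-> c = meet_abscissa N a t.
Proof.
  intros HN Ha Ht. unfold meet_abscissa.
  set (X := 4 * a ^ 2 * t * (1 - t) + N).
  assert (Hlin : ((N + 1) * c + 2 * a * t) * (2 * a * (t - 1)) - N
                 = c * (2 * (N + 1) * a * (t - 1)) - X) by (unfold X; ring).
  split; intros H.
  - replace X with (c * (2 * (N + 1) * a * (t - 1))) by lra.
    field. repeat split; lra.
  - assert (c * (2 * (N + 1) * a * (t - 1)) = X) by (rewrite H; field; repeat split; lra).
    lra.
Qed.

Lemma meet_abscissa_decreasing (N a s t : R) : 0 < N -> 0 < a -> s < t -> t < 1 ->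
  meet_abscissa N a t < meet_abscissa N a s.
Proof.
  intros HN Ha Hst Ht. unfold meet_abscissa.
  assert (Hdiff : (4 * a ^ 2 * s * (1 - s) + N) / (2 * (N + 1) * a * (s - 1))
                  - (4 * a ^ 2 * t * (1 - t) + N) / (2 * (N + 1) * a * (t - 1))
                  = (t - s) * (2 * a + N / (2 * a * (1 - s) * (1 - t))) / (N + 1)).
  { field. repeat split; lra. }
  assert (0 < N / (2 * a * (1 - s) * (1 - t))).
  { apply Rdiv_lt_0_compat; [lra|].
    repeat apply Rmult_lt_0_compat; lra. }
  assert (0 < (t - s) * (2 * a + N / (2 * a * (1 - s) * (1 - t))) / (N + 1)).
  { apply Rdiv_lt_0_compat; [apply Rmult_lt_0_compat|]; lra. }
  lra.
Qed.

Lemma lam_disc_split (n : nat) (a t c : R) :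
  lam_disc n a c
  = (((INR n + 1) * c + 2 * a * t) - 2 * a * (t - 1)) ^ 2 + 4 * INR n.
Proof. unfold lam_disc. ring. Qed.

Lemma lam_k_eq_lam_minus_iff (n : nat) (a : R) (k : nat) (c : R) :
  (1 <= k < n)%nat -> 0 < a ->
  lam_k n a k c = lam_minus n a c <-> c = c_k n a k.
Proof.
  intros Hk Ha.
  pose proof (cos_angle_lt_1 n k Hk) as Ht.
  assert (HN : 0 < INR n) by (apply lt_0_INR; lia).
  unfold lam_k, lam_minus. rewrite c_k_meet_abscissa, (lam_disc_split n a (cos (INR k * phi n))).
  rewrite <- meet_abscissa_spec by lra.
  rewrite <- opp_sqrt_sq_diff_eq_sum by nra.
  split; intros; lra.
Qed.

Lemma lam_k_eq_lam_plus_iff (n : nat) (a : R) (k : nat) (c : R) :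
  (1 <= k < n)%nat -> a < 0 ->
  lam_k n a k c = lam_plus n a c <-> c = c_k n a k.
Proof.
  intros Hk Ha.
  pose proof (cos_angle_lt_1 n k Hk) as Ht.
  assert (HN : 0 < INR n) by (apply lt_0_INR; lia).
  unfold lam_k, lam_plus. rewrite c_k_meet_abscissa, (lam_disc_split n a (cos (INR k * phi n))).
  rewrite <- meet_abscissa_spec by lra.
  rewrite <- sqrt_sq_diff_eq_sum by nra.
  split; intros; lra.
Qed.

Theorem lemma2 (n : nat) (a b : R) :
  (2 < n)%nat -> a <> 0 -> (b = 1 \/ b = -1) ->
  (* (a) *)
  (forall (k : nat) (c : R), (1 <= k <= n - 1)%nat ->
     (0 < a -> lam_sep a c > lam_k n a k c) /\
     (a < 0 -> lam_sep a c < lam_k n a k c)) /\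
  (* (b) *)
  (forall (k : nat) (c : R), (1 <= k <= p_of n)%nat ->
     lam_k n a k c = lam_k n a (n - k) c) /\
  (* (c) *)
  ((forall (k l : nat) (c : R), (1 <= k)%nat -> (k < l)%nat -> (l <= q_of n)%nat ->
      (0 < a -> lam_k n a k c > lam_k n a l c) /\
      (a < 0 -> lam_k n a k c < lam_k n a l c)) /\
   (forall (k : nat) (c : R), (1 <= k <= n - 1)%nat ->
      (0 < a -> lam_lim a c <= lam_k n a k c) /\
      (a < 0 -> lam_k n a k c <= lam_lim a c)) /\
   (Nat.Even n -> forall c : R, lam_k n a (q_of n) c = c - 2 * a)) /\
  (* (d) *)
  ((forall k : nat, (1 <= k <= n - 1)%nat ->
      (0 < a -> forall c : R, lam_k n a k c = lam_minus n a c <-> c = c_k n a k) /\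
      (a < 0 -> forall c : R, lam_k n a k c = lam_plus n a c <-> c = c_k n a k)) /\
   (forall k l : nat, (1 <= k)%nat -> (k < l)%nat -> (l <= q_of n)%nat ->
      (0 < a -> c_k n a k < c_k n a l) /\
      (a < 0 -> c_k n a k > c_k n a l))).
Proof.
  intros Hn Ha _.
  assert (Hn0 : (0 < n)%nat) by lia.
  assert (Hq : forall l, (l <= q_of n)%nat -> (2 * l <= n)%nat).
  { intros l Hl. pose proof (Nat.Div0.mul_div_le n 2). unfold q_of in Hl. lia. }
  split; [|split; [|split; [split; [|split]|split]]].
  - intros k c Hk. pose proof (cos_angle_lt_1 n k ltac:(lia)).
    unfold lam_sep, lam_k. split; intros; nra.
  - intros k c Hk. pose proof (Nat.Div0.mul_div_le (n - 1) 2). unfold p_of in Hk.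
    unfold lam_k. rewrite cos_angle_reflect by lia. reflexivity.
  - intros k l c Hk Hkl Hl. pose proof (cos_angle_decreasing n k l Hn0 Hkl (Hq l Hl)).
    unfold lam_k. split; intros; nra.
  - intros k c Hk. pose proof (COS_bound (INR k * phi n)).
    unfold lam_k, lam_lim. split; intros; nra.
  - intros Heven c. unfold lam_k, q_of. rewrite cos_angle_half_turn by assumption. ring.
  - intros k Hk. split; intros Ha' c;
      [apply lam_k_eq_lam_minus_iff | apply lam_k_eq_lam_plus_iff]; lia || lra.
  - intros k l Hk Hkl Hl.
    pose proof (Hq l Hl) as H2l.
    pose proof (cos_angle_decreasing n k l Hn0 Hkl H2l) as Hcos.
    pose proof (cos_angle_lt_1 n k ltac:(lia)) as Hcos1.
    assert (HN : 0 < INR n) by (apply lt_0_INR; lia).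
    rewrite !c_k_meet_abscissa. split; intros Ha'.
    + apply meet_abscissa_decreasing; lra.
    + pose proof (meet_abscissa_decreasing (INR n) (- a) _ _ HN ltac:(lra) Hcos Hcos1) as Hdec.
      rewrite !meet_abscissa_opp in Hdec. lra.
Qed.
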